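(* For every integer $n\geq 0$, $$C_3(n+1)=\sum_{i=0}^{n}\binom{n}{i}E_3(i),$$ with the convention $E_3(0)=1$.
   Context: The arc diagram of a set partition $P$ of $[n]=\{1,\ldots,n\}$: place nodes $1,\ldots,n$ on a line and draw an arc $(i,j)$, $i<j$, whenever $i$ and $j$ lie in the same block of $P$ and no element $l$ of that block satisfies $i<l<j$. A $3$-crossing of $P$ is a triple of arcs $(i_1,j_1),(i_2,j_2),(i_3,j_3)$ with $i_1<i_2<i_3<j_1<j_2<j_3$; an enhanced $3$-crossing is such a triple with $i_1<i_2<i_3\leq j_1<j_2<j_3$. $C_3(n)$ (resp. $E_3(n)$) is the number of partitions of $[n]$ with no $3$-crossing (resp. no enhanced $3$-crossing). *)

(* Elements of [n] = {1..n} are represented by 'I_n = {0..n-1}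
   (order-preserving shift by one, so arcs/crossings are unchanged). *)
From mathcomp Require Import all_boot.
Set Implicit Arguments. Unset Strict Implicit. Unset Printing Implicit Defensive.

Definition is_set_partition (n : nat) (P : {set {set 'I_n}}) : bool :=
  partition P [set: 'I_n].

Definition arc (n : nat) (P : {set {set 'I_n}}) (i j : 'I_n) : bool :=
  (i < j) &&
  [exists B in P, [&& i \in B, j \in B &
     [forall l in B, ~~ ((i < l) && (l < j))]]].

Definition has_3crossing (n : nat) (P : {set {set 'I_n}}) : bool :=
  [exists i1 : 'I_n, exists i2 : 'I_n, exists i3 : 'I_n,
   exists j1 : 'I_n, exists j2 : 'I_n, exists j3 : 'I_n,
   [&& arc P i1 j1, arc P i2 j2, arc P i3 j3,
       i1 < i2, i2 < i3, i3 < j1, j1 < j2 & j2 < j3]].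

Definition has_enh_3crossing (n : nat) (P : {set {set 'I_n}}) : bool :=
  [exists i1 : 'I_n, exists i2 : 'I_n, exists i3 : 'I_n,
   exists j1 : 'I_n, exists j2 : 'I_n, exists j3 : 'I_n,
   [&& arc P i1 j1, arc P i2 j2, arc P i3 j3,
       i1 < i2, i2 < i3, i3 <= j1, j1 < j2 & j2 < j3]].

Definition C3 (n : nat) : nat :=
  #|[set P : {set {set 'I_n}} | is_set_partition P && ~~ has_3crossing P]|.

Definition E3 (n : nat) : nat :=
  #|[set P : {set {set 'I_n}} | is_set_partition P && ~~ has_enh_3crossing P]|.

(* A set partition is determined by its arcs, and the arc sets of partitions of [n] are
   exactly the "arc diagrams": sets of pairs i < j in which no point is twice a left or twice
   a right endpoint (the blocks come back as the connected components).  Moving every right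
   endpoint one step to the left turns arc diagrams on [n+1] into diagrams on [n] made of
   pairs i <= j, and turns 3-crossings into enhanced 3-crossings.  In such a diagram a loop
   (i,i) touches no other pair.  Deleting the loops therefore maps the diagrams touching
   exactly the points of S bijectively onto the arc diagrams on S (the inverse puts a loop on
   every point of S that no arc touches), and S is identified with [|S|] by its increasing
   enumeration.  Hence C3(n+1) = sum_S E3(|S|), and grouping S by size gives the binomials. *)

From Pilot Require Import Defs.
From mathcomp Require Import all_boot zify.
Set Implicit Arguments. Unset Strict Implicit. Unset Printing Implicit Defensive.

Definition crossing_order (enh : bool) (i1 i2 i3 j1 j2 j3 : nat) : bool :=
  [&& i1 < i2, i2 < i3, (if enh then i3 <= j1 else i3 < j1), j1 < j2 & j2 < j3].

Lemma crossing_order_arcs enh i1 i2 i3 j1 j2 j3 :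
  crossing_order enh i1 i2 i3 j1 j2 j3 -> [/\ i1 < j1, i2 < j2 & i3 < j3].
Proof. by case: enh => /and5P[*]; split; lia. Qed.

Section ArcSets.
Variable n : nat.
Implicit Types (A B : {set 'I_n * 'I_n}) (P : {set {set 'I_n}}).

Definition crossing3 enh A : bool :=
  [exists i1 : 'I_n, exists i2 : 'I_n, exists i3 : 'I_n,
   exists j1 : 'I_n, exists j2 : 'I_n, exists j3 : 'I_n,
   [&& (i1, j1) \in A, (i2, j2) \in A, (i3, j3) \in A &
       crossing_order enh i1 i2 i3 j1 j2 j3]].

Lemma crossing3P enh A : reflect (exists i1 i2 i3 j1 j2 j3 : 'I_n,
   [/\ (i1, j1) \in A, (i2, j2) \in A, (i3, j3) \in A &
       crossing_order enh i1 i2 i3 j1 j2 j3]) (crossing3 enh A).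
Proof.
apply: (iffP idP).
  case/existsP=> i1 /existsP[i2 /existsP[i3 /existsP[j1 /existsP[j2 /existsP[j3]]]]].
  by case/and4P; exists i1, i2, i3, j1, j2, j3.
case=> i1 [i2 [i3 [j1 [j2 [j3 [*]]]]]].
apply/existsP; exists i1; apply/existsP; exists i2; apply/existsP; exists i3.
apply/existsP; exists j1; apply/existsP; exists j2; apply/existsP; exists j3.
exact/and4P.
Qed.

Lemma eq_crossing3 enh A B :
  (forall i j : 'I_n, i < j -> ((i, j) \in A) = ((i, j) \in B)) ->
  crossing3 enh A = crossing3 enh B.
Proof.
move=> eqAB; apply/crossing3P/crossing3P;
  case=> i1 [i2 [i3 [j1 [j2 [j3 [h1 h2 h3 o]]]]]];
  have [l1 l2 l3] := crossing_order_arcs o;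
  by exists i1, i2, i3, j1, j2, j3; rewrite ?eqAB // -?eqAB.
Qed.

Definition partial_bij A :=
  [forall x in A, forall y in A, (x.1 == y.1) == (x.2 == y.2)].
Definition arc_diagram A := [forall x in A, x.1 < x.2] && partial_bij A.
Definition weak_arc_diagram A := [forall x in A, x.1 <= x.2] && partial_bij A.

Lemma partial_bij_fst A a b c : partial_bij A -> (a, b) \in A -> (a, c) \in A -> b = c.
Proof.
move=> /forall_inP bijA ab /(forall_inP (bijA _ ab)) /=.
by rewrite eqxx => /eqP/esym/eqP.
Qed.

Lemma partial_bij_snd A a b c : partial_bij A -> (a, c) \in A -> (b, c) \in A -> a = b.
Proof.
move=> /forall_inP bijA ac /(forall_inP (bijA _ ac)) /=.
by rewrite eqxx => /eqP/eqP.
Qed.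

Lemma arc_diagram_lt A a b : arc_diagram A -> (a, b) \in A -> a < b.
Proof. by case/andP => /forall_inP ltA _ /ltA. Qed.

Lemma weak_arc_diagram_le A a b : weak_arc_diagram A -> (a, b) \in A -> a <= b.
Proof. by case/andP => /forall_inP leA _ /leA. Qed.

Definition arcs P : {set 'I_n * 'I_n} := [set x | Defs.arc P x.1 x.2].

Lemma has_3crossingE P : has_3crossing P = crossing3 false (arcs P).
Proof. by do 6 apply: eq_existsb => ?; rewrite !inE. Qed.

Lemma has_enh_3crossingE P : has_enh_3crossing P = crossing3 true (arcs P).
Proof. by do 6 apply: eq_existsb => ?; rewrite !inE. Qed.

End ArcSets.

Section PartitionsAsArcDiagrams.
Variable n : nat.
Implicit Types (A : {set 'I_n * 'I_n}) (P : {set {set 'I_n}}).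

Definition arc_rel A : rel 'I_n := fun i j => (i, j) \in A.
Definition arc_adj A : rel 'I_n := fun i j => arc_rel A i j || arc_rel A j i.

Lemma arc_adj_sym A : symmetric (arc_adj A).
Proof. by move=> i j; rewrite /arc_adj orbC. Qed.

Lemma connect_arc_adj_equiv A :
  {in [set: 'I_n] & &, equivalence_rel (connect (arc_adj A))}.
Proof.
move=> x y z _ _ _; split=> [|xy]; first exact: connect0.
have yx : connect (arc_adj A) y x by rewrite (sym_connect_sym (@arc_adj_sym A)).
by apply/idP/idP => [xz|yz]; [exact: connect_trans yx xz|exact: connect_trans xy yz].
Qed.

Definition partition_of A := equivalence_partition (connect (arc_adj A)) [set: 'I_n].

Lemma partition_ofP A : partition (partition_of A) [set: 'I_n].
Proof. exact/equivalence_partitionP/connect_arc_adj_equiv. Qed.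

Lemma mem_pblock_partition_of A x y :
  (y \in pblock (partition_of A) x) = connect (arc_adj A) x y.
Proof. exact: (pblock_equivalence_partition (@connect_arc_adj_equiv A)). Qed.

Section OfPartition.
Variable P : {set {set 'I_n}}.
Hypothesis partP : partition P [set: 'I_n].

Let tiP : trivIset P. Proof. by case/and3P: partP. Qed.

Let covP : cover P = [set: 'I_n]. Proof. by case/and3P: partP => /eqP. Qed.

Let mem_pblock_self x : x \in pblock P x.
Proof. by rewrite mem_pblock covP inE. Qed.

Lemma arcE i j : Defs.arc P i j =
  [&& i < j, j \in pblock P i & [forall l in pblock P i, ~~ ((i < l) && (l < j))]].
Proof.
apply/idP/idP.
  case/andP => ij /existsP[B /andP[PB /and3P[iB jB noB]]].
  by rewrite (def_pblock tiP PB iB) ij jB.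
case/and3P => ij jB noB; rewrite /Defs.arc ij; apply/existsP; exists (pblock P i).
by rewrite pblock_mem ?jB ?mem_pblock_self ?covP ?inE.
Qed.

Lemma arc_functional i j j' : Defs.arc P i j -> Defs.arc P i j' -> j = j'.
Proof.
rewrite !arcE => /and3P[ij jB /forall_inP noB] /and3P[ij' jB' /forall_inP noB'].
apply/val_inj/eqP; rewrite eqn_leq; apply/andP; split; rewrite leqNgt; apply/negP => lt.
  by have := noB _ jB'; rewrite ij' lt.
by have := noB' _ jB; rewrite ij lt.
Qed.

Lemma arc_injective i i' j : Defs.arc P i j -> Defs.arc P i' j -> i = i'.
Proof.
rewrite !arcE => /and3P[ij jB /forall_inP noB] /and3P[i'j jB' /forall_inP noB'].
have samePi : pblock P i = pblock P i'.
  by rewrite -(same_pblock tiP jB) (same_pblock tiP jB').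
have iB' : i \in pblock P i' by rewrite -samePi.
have i'B : i' \in pblock P i by rewrite samePi.
apply/val_inj/eqP; rewrite eqn_leq; apply/andP; split; rewrite leqNgt; apply/negP => lt.
  by have := noB' _ iB'; rewrite ij lt.
by have := noB _ i'B; rewrite i'j lt.
Qed.

Lemma arc_diagram_arcs : arc_diagram (arcs P).
Proof.
apply/andP; split; first by apply/forall_inP => -[i j]; rewrite inE => /andP[].
apply/forall_inP => -[i j]; rewrite inE /= => ij.
apply/forall_inP => -[i' j']; rewrite inE /= => i'j'.
have [eqii'|ii'] := eqVneq i i'.
  by rewrite -eqii' in i'j'; rewrite (arc_functional ij i'j') eqxx.
by have [jj'|//] := eqVneq j j'; rewrite jj' in ij; rewrite (arc_injective ij i'j') eqxx in ii'.
Qed.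

Lemma arc_next (x l : 'I_n) : l \in pblock P x -> x < l ->
  (forall z, z \in pblock P x -> x < z -> l <= z) -> Defs.arc P x l.
Proof.
move=> lB xl lmin; rewrite arcE xl lB; apply/forall_inP => z zB.
by apply/negP => /andP[xz zl]; have := lmin z zB xz; rewrite leqNgt zl.
Qed.

Lemma connect_arcs_pblock (x y : 'I_n) : x <= y -> y \in pblock P x ->
  connect (arc_adj (arcs P)) x y.
Proof.
have [d] : exists d, y - x < d by exists (y - x).+1.
elim: d x => // d IH x dxy xy yB.
have [<-|xNy] := eqVneq x y; first exact: connect0.
have ltxy : x < y by rewrite ltn_neqAle val_eqE xNy.
case: (@arg_minnP _ y (fun z => (z \in pblock P x) && (x < z)) val); first by rewrite yB.
move=> l /andP[lB xl] lmin.
have xl_arc : Defs.arc P x l by apply: arc_next => // z zB xz; apply: lmin; rewrite zB.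
have ly : l <= y by apply: lmin; rewrite yB.
apply: connect_trans (connect1 _) (IH l _ _ _); rewrite ?(same_pblock tiP lB) //.
- by rewrite /arc_adj /arc_rel inE xl_arc.
- by lia.
Qed.

Lemma pblock_connect_arcs x y : (y \in pblock P x) = connect (arc_adj (arcs P)) x y.
Proof.
apply/idP/idP => [yB|xy]; last first.
  rewrite -(closed_connect _ xy) ?mem_pblock_self // => z w zw.
  rewrite -!eq_pblock ?covP ?inE //; congr (_ == _).
  move: zw; rewrite /arc_adj /arc_rel !inE.
  by case/orP => /andP[_ /existsP[B /and3P[PB zB /andP[wB _]]]];
    rewrite (def_pblock tiP PB zB) (def_pblock tiP PB wB).
have [xy|/ltnW yx] := leqP x y; first exact: connect_arcs_pblock.
rewrite (sym_connect_sym (@arc_adj_sym _)); apply: connect_arcs_pblock => //.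
by rewrite (same_pblock tiP yB).
Qed.

Lemma partition_of_arcs : partition_of (arcs P) = P.
Proof.
rewrite -{2}(equivalence_partition_pblock partP); apply: eq_imset => x.
by apply/setP => y; rewrite !inE pblock_connect_arcs.
Qed.

End OfPartition.

Section OfArcDiagram.
Variable A : {set 'I_n * 'I_n}.
Hypothesis diagA : arc_diagram A.

Let bijA : partial_bij A. Proof. by case/andP: diagA. Qed.

Lemma connect_arc_rel_leq x y : connect (arc_rel A) x y -> x <= y.
Proof.
case/connectP => p + ->; elim: p x => //= z p IH x /andP[xz zp].
exact: leq_trans (ltnW (arc_diagram_lt diagA xz)) (IH _ zp).
Qed.

Lemma connect_arc_rel_first x y : connect (arc_rel A) x y -> x != y ->
  exists2 w, (x, w) \in A & connect (arc_rel A) w y.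
Proof.
case/connectP => -[|w p] /=; first by move=> _ ->; rewrite eqxx.
by case/andP => xw wp -> _; exists w => //; apply/connectP; exists p.
Qed.

Lemma connect_arc_rel_last x y : connect (arc_rel A) x y -> x != y ->
  exists2 w, connect (arc_rel A) x w & (w, y) \in A.
Proof.
case/connectP => p; case/lastP: p => [|p w] /=; first by move=> _ ->; rewrite eqxx.
rewrite rcons_path last_rcons => /andP[xp wy] -> _.
by exists (last x p) => //; apply/connectP; exists p.
Qed.

Definition arc_comparable x z := connect (arc_rel A) x z || connect (arc_rel A) z x.

(* The component of a point is a chain, since no point has two successors or two predecessors. *)
Lemma arc_comparable_adj x z w :
  arc_comparable x z -> arc_adj A z w -> arc_comparable x w.
Proof.
rewrite /arc_comparable /arc_adj /arc_rel => /orP[xz|zx] /orP[zw|wz].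
- by rewrite (connect_trans xz (connect1 zw)).
- have [->|xNz] := eqVneq x z; first by apply/orP; right; apply: connect1.
  by have [v xv vz] := connect_arc_rel_last xz xNz; rewrite (partial_bij_snd bijA wz vz) xv.
- have [<-|zNx] := eqVneq z x; first by apply/orP; left; apply: connect1.
  by have [v zv vx] := connect_arc_rel_first zx zNx; rewrite (partial_bij_fst bijA zw zv) vx orbT.
- by rewrite (connect_trans (connect1 wz) zx) orbT.
Qed.

Lemma connect_arc_adj_first x y : connect (arc_adj A) x y -> x < y ->
  exists2 w, (x, w) \in A & w <= y.
Proof.
move=> xy ltxy; have cmp : arc_comparable x y.
  have closed_cmp : closed (arc_adj A) (arc_comparable x).
    move=> z w zw; apply/idP/idP => /arc_comparable_adj; first exact.
    by apply; rewrite arc_adj_sym.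
  by have := closed_connect closed_cmp xy; rewrite -!topredE /= /arc_comparable connect0 => <-.
have {cmp} : connect (arc_rel A) x y.
  by case/orP: cmp => // /connect_arc_rel_leq; rewrite leqNgt ltxy.
move/connect_arc_rel_first; rewrite neq_ltn ltxy => /(_ isT)[w xw wy].
by exists w => //; apply: connect_arc_rel_leq.
Qed.

Lemma arcs_partition_of : arcs (partition_of A) = A.
Proof.
apply/setP => -[i j]; rewrite inE /= arcE ?partition_ofP // mem_pblock_partition_of.
apply/idP/idP => [/and3P[ij cij /forall_inP noB] | ij].
  have [w iw wj] := connect_arc_adj_first cij ij.
  have [ltwj|jw] := ltnP w j.
    have adj_iw : arc_adj A i w by rewrite /arc_adj /arc_rel iw.
    have := noB w; rewrite mem_pblock_partition_of connect1 //.
    by rewrite (arc_diagram_lt diagA iw) ltwj => /(_ isT).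
  by have <- : w = j by apply/val_inj/eqP; rewrite eqn_leq wj.
rewrite (arc_diagram_lt diagA ij) connect1 /arc_adj /arc_rel ?ij //=.
apply/forall_inP => l; rewrite mem_pblock_partition_of => il.
apply/negP => /andP[ltil ltlj]; have [w iw wl] := connect_arc_adj_first il ltil.
by rewrite (partial_bij_fst bijA ij iw) in ltlj; lia.
Qed.

End OfArcDiagram.

Lemma card_partitions_arc_diagrams (Q : pred {set 'I_n * 'I_n}) :
  #|[set P | is_set_partition P && Q (arcs P)]| = #|[set A | arc_diagram A && Q A]|.
Proof.
have arcs_inj : {in [set P | is_set_partition P && Q (arcs P)] &, injective (@arcs n)}.
  move=> P P'; rewrite !inE => /andP[partP _] /andP[partP' _] eqPP'.
  by rewrite -(partition_of_arcs partP) eqPP' partition_of_arcs.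
rewrite -(card_in_imset arcs_inj); apply: eq_card => A; apply/imsetP/idP.
  by case=> P; rewrite !inE => /andP[partP QP] ->; rewrite arc_diagram_arcs.
rewrite inE => /andP[diagA QA]; exists (partition_of A); last by rewrite arcs_partition_of.
by rewrite inE /is_set_partition partition_ofP arcs_partition_of.
Qed.

End PartitionsAsArcDiagrams.

Lemma forall_in_imset (aT rT : finType) (f : aT -> rT) (D : {set aT}) (p : pred rT) :
  [forall x in f @: D, p x] = [forall y in D, p (f y)].
Proof.
apply/forall_inP/forall_inP => [pf y yD|pf _ /imsetP[y yD ->]]; last exact: pf.
exact/pf/imset_f.
Qed.

Section Shift.
Variable n : nat.
Implicit Types (W : {set 'I_n * 'I_n}) (A : {set 'I_n.+1 * 'I_n.+1}).

Definition shift (x : 'I_n * 'I_n) : 'I_n.+1 * 'I_n.+1 :=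
  (widen_ord (leqnSn n) x.1, lift ord0 x.2).

Lemma shift_inj : injective shift.
Proof.
move=> [a b] [c d]; rewrite /shift /= => -[ac bd].
by congr pair; apply/val_inj => //; apply: addnI bd.
Qed.

Lemma partial_bij_shift W : partial_bij (shift @: W) = partial_bij W.
Proof.
rewrite /partial_bij forall_in_imset; apply: eq_forallb_in => x _.
by rewrite forall_in_imset; apply: eq_forallb_in => y _; rewrite /= (inj_eq lift_inj).
Qed.

Lemma arc_diagram_shift W : arc_diagram (shift @: W) = weak_arc_diagram W.
Proof.
rewrite /arc_diagram /weak_arc_diagram partial_bij_shift forall_in_imset.
by congr andb; apply: eq_forallb_in => x _; rewrite /= lift0 ltnS.
Qed.

(* The order patterns correspond by conversion: [i3 < j1.+1] is [i3 <= j1]. *)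
Lemma crossing3_shift W : crossing3 false (shift @: W) = crossing3 true W.
Proof.
apply/crossing3P/crossing3P => [[a1 [a2 [a3 [b1 [b2 [b3 [+ + + +]]]]]]] |
                                  [i1 [i2 [i3 [j1 [j2 [j3 [h1 h2 h3 o]]]]]]]].
  case/imsetP => -[i1 j1] h1 [-> ->]; case/imsetP => -[i2 j2] h2 [-> ->].
  by case/imsetP => -[i3 j3] h3 [-> ->] o; exists i1, i2, i3, j1, j2, j3.
exists (widen_ord (leqnSn n) i1), (widen_ord (leqnSn n) i2), (widen_ord (leqnSn n) i3).
exists (lift ord0 j1), (lift ord0 j2), (lift ord0 j3).
by split; [exact: imset_f h1 | exact: imset_f h2 | exact: imset_f h3 | exact: o].
Qed.

Lemma shift_preimset A : arc_diagram A -> shift @: (shift @^-1: A) = A.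
Proof.
move=> diagA; apply/setP => -[a b]; apply/imsetP/idP => [[y + ->]|ab]; first by rewrite inE.
have ltab := arc_diagram_lt diagA ab; have ltbn := ltn_ord b.
have [a' b'] : a < n /\ b.-1 < n by split; lia.
have shift_ab : shift (Ordinal a', Ordinal b') = (a, b).
  by congr pair; apply/val_inj; rewrite //= /bump leq0n add1n prednK //; lia.
by exists (Ordinal a', Ordinal b'); rewrite ?inE shift_ab.
Qed.

Lemma card_arc_diagrams_shift :
  #|[set A : {set 'I_n.+1 * 'I_n.+1} | arc_diagram A && ~~ crossing3 false A]| =
  #|[set W : {set 'I_n * 'I_n} | weak_arc_diagram W && ~~ crossing3 true W]|.
Proof.
rewrite -(card_imset _ (imset_inj shift_inj)); apply: eq_card => A.
rewrite inE; apply/idP/imsetP => [/andP[diagA noA]|[W + ->]].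
  exists (shift @^-1: A); last by rewrite shift_preimset.
  by rewrite inE -arc_diagram_shift -crossing3_shift shift_preimset ?diagA.
by rewrite !inE arc_diagram_shift crossing3_shift.
Qed.

End Shift.

Definition endpoints n (A : {set 'I_n * 'I_n}) : {set 'I_n} :=
  [set i | [exists j, ((i, j) \in A) || ((j, i) \in A)]].

Lemma endpoints_fst n (A : {set 'I_n * 'I_n}) a b : (a, b) \in A -> a \in endpoints A.
Proof. by move=> ab; rewrite inE; apply/existsP; exists b; rewrite ab. Qed.

Lemma endpoints_snd n (A : {set 'I_n * 'I_n}) a b : (a, b) \in A -> b \in endpoints A.
Proof. by move=> ab; rewrite inE; apply/existsP; exists a; rewrite ab orbT. Qed.

Lemma partial_bijS n (A B : {set 'I_n * 'I_n}) :
  A \subset B -> partial_bij B -> partial_bij A.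
Proof.
move=> /subsetP sAB /forall_inP bijB; apply/forall_inP => x /sAB xB.
by apply/forall_inP => y /sAB; apply: (forall_inP (bijB _ xB)).
Qed.

Section Loops.
Variable m : nat.
Implicit Types A B : {set 'I_m * 'I_m}.

Definition add_loops A := A :|: [set (a, a) | a in ~: endpoints A].
Definition strict_part B := [set x in B | x.1 < x.2].

Lemma mem_add_loops A a b :
  ((a, b) \in add_loops A) = ((a, b) \in A) || ((a == b) && (a \notin endpoints A)).
Proof.
rewrite in_setU; congr orb.
apply/imsetP/andP => [[c + [-> ->]]|[/eqP <- aNA]]; first by rewrite inE eqxx.
by exists a; rewrite ?in_setC.
Qed.

Lemma crossing3_add_loops enh A : crossing3 enh (add_loops A) = crossing3 enh A.
Proof.
apply: eq_crossing3 => i j ij; rewrite mem_add_loops.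
have /negbTE-> : i != j by rewrite -val_eqE neq_ltn ij.
by rewrite orbF.
Qed.

Lemma endpoints_add_loops A : endpoints (add_loops A) = setT.
Proof.
apply/setP => a; rewrite in_setT; have [|aNA] := boolP (a \in endpoints A).
  rewrite !in_set => /existsP[b bA]; apply/existsP; exists b.
  by rewrite !mem_add_loops; case/orP: bA => ->; rewrite ?orbT.
by apply: (@endpoints_fst _ _ a a); rewrite mem_add_loops eqxx aNA orbT.
Qed.

Lemma weak_arc_diagram_add_loops A : arc_diagram A -> weak_arc_diagram (add_loops A).
Proof.
move=> diagA; have /andP[_ /forall_inP bijA] := diagA.
apply/andP; split.
  apply/forall_inP => -[a b]; rewrite mem_add_loops.
  by case/orP => [/(arc_diagram_lt diagA)/ltnW | /andP[/eqP->]].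
have loop_out a c b : (a, b) \in A -> c \notin endpoints A -> (a != c) && (b != c).
  move=> ab cNA; apply/andP; split; apply: contraNneq cNA => <-.
    exact: endpoints_fst ab.
  exact: endpoints_snd ab.
apply/forall_inP => -[a b]; rewrite mem_add_loops => /orP[ab|/andP[/eqP<- aNA]];
apply/forall_inP => -[c d]; rewrite mem_add_loops => /orP[cd|/andP[/eqP<- cNA]] /=.
- exact: (forall_inP (bijA _ ab) _ cd).
- by have /andP[/negbTE-> /negbTE->] := loop_out _ _ _ ab cNA.
- by rewrite ![a == _]eq_sym; have /andP[/negbTE-> /negbTE->] := loop_out _ _ _ cd aNA.
- by rewrite eqxx.
Qed.

Lemma strict_part_add_loops A : arc_diagram A -> strict_part (add_loops A) = A.
Proof.
move=> diagA; apply/setP => -[a b]; rewrite inE mem_add_loops /=.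
have [ab|_] := boolP ((a, b) \in A); first by rewrite (arc_diagram_lt diagA ab).
by case: eqP => //= <-; rewrite ltnn andbF.
Qed.

Lemma arc_diagram_strict_part B : weak_arc_diagram B -> arc_diagram (strict_part B).
Proof.
case/andP => _ bijB; apply/andP; split; first by apply/forall_inP => x; rewrite inE => /andP[].
by apply: partial_bijS bijB; apply/subsetP => x; rewrite inE => /andP[].
Qed.

Section LoopDecomposition.
Variable B : {set 'I_m * 'I_m}.
Hypotheses (weakB : weak_arc_diagram B) (endB : endpoints B = setT).

Lemma loop_notin_endpoints a : ((a, a) \in B) = (a \notin endpoints (strict_part B)).
Proof.
have /andP[_ bijB] := weakB.
apply/idP/idP => [aa|aNS].
  apply/negP; rewrite inE => /existsP[c]; rewrite !inE /= => /orP[]/andP[ac lt].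
    by rewrite (partial_bij_fst bijB aa ac) ltnn in lt.
  by rewrite (partial_bij_snd bijB ac aa) ltnn in lt.
have : a \in endpoints B by rewrite endB inE.
rewrite inE => /existsP[c /orP[ac|ca]].
  have [ltac|le_ca] := ltnP a c.
    have : (a, c) \in strict_part B by rewrite inE ac ltac.
    by move/endpoints_fst => aS; rewrite aS in aNS.
  have eac : a = c by apply/eqP; rewrite -val_eqE eqn_leq le_ca (weak_arc_diagram_le weakB ac).
  by rewrite {2}eac.
have [ltca|le_ac] := ltnP c a.
  have : (c, a) \in strict_part B by rewrite inE ca ltca.
  by move/endpoints_snd => aS; rewrite aS in aNS.
have eac : a = c by apply/eqP; rewrite -val_eqE eqn_leq le_ac (weak_arc_diagram_le weakB ca).
by rewrite {1}eac.
Qed.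

Lemma add_loops_strict_part : add_loops (strict_part B) = B.
Proof.
apply/setP => -[a b]; rewrite mem_add_loops inE /=.
have [<-|aNb] := eqVneq a b; first by rewrite ltnn andbF loop_notin_endpoints.
rewrite /= orbF; have [ltab|le_ba] := ltnP a b; first by rewrite andbT.
rewrite andbF; apply/esym/negP => /(weak_arc_diagram_le weakB) le_ab.
by move: aNb; rewrite -val_eqE eqn_leq le_ab le_ba.
Qed.

End LoopDecomposition.
End Loops.

Section Relabel.
Variables (k n : nat) (f : 'I_k -> 'I_n).
Hypothesis f_mono : {mono f : a b / a < b}.
Implicit Types (B : {set 'I_k * 'I_k}) (W : {set 'I_n * 'I_n}).

Lemma mono_leE : {mono f : a b / a <= b}.
Proof. by move=> a b; rewrite leqNgt f_mono -leqNgt. Qed.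

Lemma mono_inj : injective f.
Proof.
move=> a b fab; apply/val_inj/eqP.
by rewrite eqn_leq -(mono_leE a b) -(mono_leE b a) fab leqnn.
Qed.

Definition relabel (x : 'I_k * 'I_k) : 'I_n * 'I_n := (f x.1, f x.2).

Lemma relabel_inj : injective relabel.
Proof. by move=> [a b] [c d] [/mono_inj -> /mono_inj ->]. Qed.

Lemma crossing3_relabel enh B : crossing3 enh (relabel @: B) = crossing3 enh B.
Proof.
have crossing_relabel a1 a2 a3 b1 b2 b3 :
    crossing_order enh (f a1) (f a2) (f a3) (f b1) (f b2) (f b3) =
    crossing_order enh a1 a2 a3 b1 b2 b3.
  by rewrite /crossing_order !f_mono mono_leE.
apply/crossing3P/crossing3P => [[i1 [i2 [i3 [j1 [j2 [j3 [+ + + +]]]]]]] |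
                                [a1 [a2 [a3 [b1 [b2 [b3 [h1 h2 h3 o]]]]]]]].
  case/imsetP => -[a1 b1] h1 [-> ->]; case/imsetP => -[a2 b2] h2 [-> ->].
  case/imsetP => -[a3 b3] h3 [-> ->]; rewrite crossing_relabel => o.
  by exists a1, a2, a3, b1, b2, b3.
exists (f a1), (f a2), (f a3), (f b1), (f b2), (f b3).
rewrite crossing_relabel.
by split; [exact: imset_f h1 | exact: imset_f h2 | exact: imset_f h3 |].
Qed.

Lemma weak_arc_diagram_relabel B : weak_arc_diagram (relabel @: B) = weak_arc_diagram B.
Proof.
rewrite /weak_arc_diagram /partial_bij !forall_in_imset; congr andb.
  by apply: eq_forallb_in => x _; rewrite mono_leE.
apply: eq_forallb_in => x _; rewrite forall_in_imset; apply: eq_forallb_in => y _.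
by rewrite /= !(inj_eq mono_inj).
Qed.

Lemma endpoints_relabel B : endpoints (relabel @: B) = f @: endpoints B.
Proof.
apply/setP => i; apply/idP/imsetP => [|[a + ->]].
  rewrite inE => /existsP[j /orP[] /imsetP[[a b] ab [e1 e2]]].
    by exists a; rewrite ?e1 ?(endpoints_fst ab).
  by exists b; rewrite ?e2 ?(endpoints_snd ab).
rewrite inE => /existsP[b /orP[ab|ba]].
  exact: (@endpoints_fst _ _ _ (f b)) (imset_f relabel ab).
exact: (@endpoints_snd _ _ (f b)) (imset_f relabel ba).
Qed.

Lemma relabel_preimset W : endpoints W \subset f @: setT -> relabel @: (relabel @^-1: W) = W.
Proof.
move=> /subsetP sW; apply/setP => -[i j].
apply/imsetP/idP => [[x + ->]|ij]; first by rewrite inE.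
have [a _ ei] := imsetP (sW i (endpoints_fst ij)).
have [b _ ej] := imsetP (sW j (endpoints_snd ij)).
by exists (a, b); rewrite ?inE /relabel /= -ei -ej.
Qed.

Lemma endpoints_preimset W : endpoints W = f @: setT -> endpoints (relabel @^-1: W) = setT.
Proof.
move=> suppW; apply: (imset_inj mono_inj).
by rewrite -endpoints_relabel relabel_preimset suppW.
Qed.

End Relabel.

Lemma enum_val_ltE n (S : {set 'I_n}) : {mono @enum_val _ (mem S) : a b / a < b}.
Proof.
have lt_trans : transitive (fun x y : 'I_n => x < y) by move=> ? ? ?; exact: ltn_trans.
have sortedS : sorted (fun x y : 'I_n => x < y) (enum S).
  have sortedT : sorted (fun x y : 'I_n => x < y) (enum 'I_n).
    by have := iota_ltn_sorted 0 n; rewrite -val_enum_ord sorted_map.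
  by rewrite enumT in sortedT; apply: sorted_filter.
have lt_enum (a b : 'I_#|S|) : a < b -> enum_val a < enum_val b.
  move=> ab; rewrite (enum_val_nth (enum_val a) a) (enum_val_nth (enum_val a) b).
  by apply: (sorted_ltn_nth lt_trans _ sortedS); rewrite ?inE -?cardE.
move=> a b; case: (ltngtP a b) => [/lt_enum -> // | /lt_enum /ltnW | /val_inj ->].
  by rewrite leqNgt => /negbTE.
by rewrite ltnn.
Qed.

Lemma imset_enum_val n (S : {set 'I_n}) : @enum_val _ (mem S) @: setT = S.
Proof.
apply/setP => i; apply/imsetP/idP => [[a _ ->]|iS]; first exact: enum_valP.
by exists (enum_rank_in iS i); rewrite ?enum_rankK_in.
Qed.

Lemma E3_arc_diagrams k :
  E3 k = #|[set A : {set 'I_k * 'I_k} | arc_diagram A && ~~ crossing3 true A]|.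
Proof.
rewrite -(card_partitions_arc_diagrams (fun A => ~~ crossing3 true A)).
by apply: eq_card => P; rewrite !inE has_enh_3crossingE.
Qed.

Lemma C3_arc_diagrams k :
  C3 k = #|[set A : {set 'I_k * 'I_k} | arc_diagram A && ~~ crossing3 false A]|.
Proof.
rewrite -(card_partitions_arc_diagrams (fun A => ~~ crossing3 false A)).
by apply: eq_card => P; rewrite !inE has_3crossingE.
Qed.

Lemma card_weak_arc_diagrams_endpoints n (S : {set 'I_n}) :
  #|[set W | [&& weak_arc_diagram W, ~~ crossing3 true W & endpoints W == S]]| = E3 #|S|.
Proof.
pose f : 'I_#|S| -> 'I_n := enum_val.
have f_mono : {mono f : a b / a < b} by exact: enum_val_ltE.
have fT : f @: setT = S by exact: imset_enum_val.
pose D := [set A : {set 'I_#|S| * 'I_#|S|} | arc_diagram A && ~~ crossing3 true A].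
pose g A : {set 'I_n * 'I_n} := relabel f @: add_loops A.
have g_inj : {in D &, injective g}.
  move=> A A'; rewrite !inE => /andP[diagA _] /andP[diagA' _].
  move/(imset_inj (relabel_inj f_mono)) => eqAA'.
  by rewrite -(strict_part_add_loops diagA) eqAA' strict_part_add_loops.
rewrite E3_arc_diagrams -/D -(card_in_imset g_inj); apply: eq_card => W; rewrite inE.
apply/idP/imsetP => [/and3P[weakW noW /eqP endW]|[A + ->]].
  have endB := endpoints_preimset f_mono (etrans endW (esym fT)).
  have W_im : relabel f @: (relabel f @^-1: W) = W.
    by rewrite relabel_preimset // endW fT.
  have weakB : weak_arc_diagram (relabel f @^-1: W).
    by rewrite -(weak_arc_diagram_relabel f_mono) W_im.
  exists (strict_part (relabel f @^-1: W)); last by rewrite /g add_loops_strict_part.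
  rewrite inE arc_diagram_strict_part //= -(crossing3_add_loops true) add_loops_strict_part //.
  by rewrite -(crossing3_relabel f_mono) W_im.
rewrite inE => /andP[diagA noA].
rewrite weak_arc_diagram_relabel // weak_arc_diagram_add_loops // crossing3_relabel //.
by rewrite crossing3_add_loops noA endpoints_relabel // endpoints_add_loops fT eqxx.
Qed.

Lemma card_weak_arc_diagrams n :
  #|[set W : {set 'I_n * 'I_n} | weak_arc_diagram W && ~~ crossing3 true W]| =
  \sum_(S : {set 'I_n}) E3 #|S|.
Proof.
rewrite -sum1_card (partition_big (@endpoints n) predT) //=.
apply: eq_bigr => S _; rewrite -card_weak_arc_diagrams_endpoints -sum1_card.
by apply: eq_bigl => W; rewrite !inE andbA.
Qed.

Lemma sum_card_subsets (T : finType) (g : nat -> nat) :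
  \sum_(S : {set T}) g #|S| = \sum_(i < #|T|.+1) 'C(#|T|, i) * g i.
Proof.
rewrite (partition_big (fun S : {set T} => inord #|S| : 'I_#|T|.+1) predT) //=.
apply: eq_bigr => i _.
have card_lt (S : {set T}) : #|S| < #|T|.+1 by rewrite ltnS max_card.
rewrite (eq_bigr (fun _ => g i)); last by move=> S /eqP <-; rewrite inordK.
rewrite (eq_bigl (mem [set S : {set T} | #|S| == i])); last first.
  by move=> S; rewrite !inE -val_eqE /= inordK.
by rewrite sum_nat_const card_draws.
Qed.

Theorem mainTheorem2 (n : nat) :
  C3 n.+1 = \sum_(i < n.+1) 'C(n, i) * E3 i.
Proof.
rewrite C3_arc_diagrams card_arc_diagrams_shift card_weak_arc_diagrams.
by have := sum_card_subsets 'I_n E3; rewrite card_ord.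
Qed.
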